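(* Let $\lambda\in\mathbb{C}^*$ and $\alpha_1,\alpha_2,\beta_1,\beta_2\in\mathbb{C}$ with $(\alpha_1,\beta_1)\neq(0,0)$ and $(\alpha_2,\beta_2)\neq(0,0)$. Consider the tensor product $\mathcal{L}$-module $\Omega(\lambda,\alpha_1,\beta_1)\otimes\Omega(\lambda,\alpha_2,\beta_2)$ (both factors being $\mathbb{C}[Y]$), and let $U=\mathrm{span}\{\sum_{t=0}^{j}\binom{j}{t}Y^{j-t}\otimes Y^t\mid j\in\mathbb{N}\}$. Then $U$ is a nonzero proper $\mathcal{L}$-submodule of $\Omega(\lambda,\alpha_1,\beta_1)\otimes\Omega(\lambda,\alpha_2,\beta_2)$; consequently $\Omega(\lambda,\alpha_1,\beta_1)\otimes\Omega(\lambda,\alpha_2,\beta_2)$ is a reducible $\mathcal{L}$-module.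
   Context: The (centerless) Heisenberg-Virasoro algebra $\mathcal{L}$ is the complex Lie algebra with basis $\{L_m,H_m\mid m\in\mathbb{Z}\}$ and brackets $[L_m,L_n]=(n-m)L_{m+n}$, $[L_m,H_n]=nH_{m+n}$, $[H_m,H_n]=0$. For $\lambda\in\mathbb{C}^*$ and $\alpha,\beta\in\mathbb{C}$, $\Omega(\lambda,\alpha,\beta)$ denotes the $\mathcal{L}$-module $\mathbb{C}[Y]$ with $L_m f(Y)=\lambda^m(Y+m\alpha)f(Y-m)$ and $H_m f(Y)=\beta\lambda^m f(Y-m)$ for $m\in\mathbb{Z}$. The tensor product has action $x(v\otimes w)=xv\otimes w+v\otimes xw$. $\mathbb{N}$ denotes non-negative integers. *)

From HB Require Import structures.
From mathcomp Require Import all_boot all_order all_algebra.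
From mathcomp Require Import complex.
From mathcomp Require Import reals.
Set Implicit Arguments. Unset Strict Implicit. Unset Printing Implicit Defensive.
Import Order.TTheory GRing.Theory Num.Theory.
Local Open Scope ring_scope.

Section Defs.
Variable K : fieldType.

Definition OmL (lam a : K) (m : int) (f : {poly K}) : {poly K} :=
  lam ^ m *: (('X + (m%:~R * a)%:P) * (f \Po ('X - (m%:~R)%:P))).
Definition OmH (lam b : K) (m : int) (f : {poly K}) : {poly K} :=
  (b * lam ^ m) *: (f \Po ('X - (m%:~R)%:P)).

(* K[Y] (x) K[Y] is identified with {poly {poly K}}: p (x) q  |->  p(Y1) q(Y2),
   the outer variable being Y1 (first factor), the inner one Y2 (second). *)
Definition tens (p q : {poly K}) : {poly {poly K}} := map_poly polyC p * q%:P.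

(* T (x) id and id (x) T for linear T : K[Y] -> K[Y],
   defined on F = sum_i Y1^i (x) F_i. *)
Definition lift1 (T : {poly K} -> {poly K}) (F : {poly {poly K}}) : {poly {poly K}} :=
  \sum_(i < size F) tens (T 'X^i) F`_i.
Definition lift2 (T : {poly K} -> {poly K}) (F : {poly {poly K}}) : {poly {poly K}} :=
  \sum_(i < size F) tens 'X^i (T F`_i).

(* action on the tensor product: x (v (x) w) = x v (x) w + v (x) x w *)
Definition TL (lam a1 a2 : K) (m : int) (F : {poly {poly K}}) :=
  lift1 (OmL lam a1 m) F + lift2 (OmL lam a2 m) F.
Definition TH (lam b1 b2 : K) (m : int) (F : {poly {poly K}}) :=
  lift1 (OmH lam b1 m) F + lift2 (OmH lam b2 m) F.

Definition is_submodule (lam a1 b1 a2 b2 : K) (S : {poly {poly K}} -> Prop) :=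
  [/\ S 0,
      (forall F G, S F -> S G -> S (F + G)),
      (forall (c : K) F, S F -> S (c%:P%:P * F)),
      (forall m F, S F -> S (TL lam a1 a2 m F)) &
      (forall m F, S F -> S (TH lam b1 b2 m F))].

Definition nonzero_proper (S : {poly {poly K}} -> Prop) :=
  (exists F, S F /\ F <> 0) /\ (exists F, ~ S F).

Definition reducible (lam a1 b1 a2 b2 : K) :=
  exists S, is_submodule lam a1 b1 a2 b2 S /\ nonzero_proper S.

Definition ugen (j : nat) : {poly {poly K}} :=
  \sum_(t < j.+1) tens 'X^(j - t) 'X^t *+ 'C(j, t).

Definition Uspan (F : {poly {poly K}}) : Prop :=
  exists (n : nat) (c : nat -> K), F = \sum_(j < n) (c j)%:P%:P * ugen j.
End Defs.

From HB Require Import structures.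
From mathcomp Require Import all_boot all_order all_algebra.
From mathcomp Require Import complex.
From mathcomp Require Import reals.
Import Order.TTheory GRing.Theory Num.Theory.
Local Open Scope ring_scope.

(* Identify K[Y] (x) K[Y] with K[Y1, Y2]. Then u_j = (Y1 + Y2)^j, so U is the
   image of the ring morphism subst_sum : p |-> p(Y1 + Y2). Both L_m and H_m act
   on a factor as f |-> P f(Y - m), with P = lam^m (Y + m alpha), resp.
   beta lam^m, hence on the tensor product as
   F |-> P1(Y1) F(Y1 - m, Y2) + P2(Y2) F(Y1, Y2 - m).
   On F = p(Y1 + Y2) both shifts give p(Y1 + Y2 - m), and P1(Y1) + P2(Y2) is
   again a polynomial in Y1 + Y2 since P1 and P2 have the same leading
   coefficient: subst_sum intertwines Omega(lam, alpha1 + alpha2, beta1 + beta2)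
   with U. Finally Y1 is not in U, because every element of U takes the same
   value at (1, 0) and at (0, 1). *)

Section TensorSquare.
Variable K : fieldType.
Local Notation PP := {poly {poly K}}.
Local Notation Y1 := ('X : PP).
Local Notation Y2 := (('X : {poly K})%:P : PP).

Definition subst_sum : {rmorphism {poly K} -> PP} :=
  (comp_poly (Y1 + Y2) \o map_poly polyC)%FUN.

Lemma subst_sumE p : subst_sum p = p^:P \Po (Y1 + Y2). Proof. by []. Qed.

Lemma subst_sumC c : subst_sum c%:P = c%:P%:P.
Proof. by rewrite subst_sumE map_polyC comp_polyC. Qed.

Lemma subst_sumX : subst_sum 'X = Y1 + Y2.
Proof. by rewrite subst_sumE map_polyX comp_polyX. Qed.

Lemma ugenE j : ugen K j = subst_sum 'X^j.
Proof.
rewrite rmorphXn subst_sumX exprDn; apply: eq_bigr => t _.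
by rewrite /tens map_polyXn rmorphXn.
Qed.

Lemma UspanP F : Uspan F <-> exists p, F = subst_sum p.
Proof.
split=> [[n [c ->]] | [p ->]].
  exists (\sum_(j < n) c j *: 'X^j); rewrite rmorph_sum; apply: eq_bigr => j _.
  by rewrite -mul_polyC rmorphM subst_sumC ugenE.
exists (size p), (fun j => p`_j); rewrite -{1}[p]coefK poly_def rmorph_sum.
by apply: eq_bigr => j _; rewrite -mul_polyC rmorphM subst_sumC ugenE.
Qed.

Lemma horner2_subst_sum p s t : (subst_sum p).[s%:P].[t] = p.[s + t].
Proof.
by rewrite subst_sumE horner_comp !hornerE -/(comp_poly _ p) horner_comp !hornerE.
Qed.

Lemma Y1_notin_Uspan : ~ Uspan Y1.
Proof.
move=> /UspanP[p hp].
have := horner2_subst_sum p 0 1; have := horner2_subst_sum p 1 0.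
rewrite -hp add0r addr0 !hornerE => <- /eqP.
by rewrite eq_sym oner_eq0.
Qed.

Section ShiftOperator.
Context {T : {poly K} -> {poly K}} {P : {poly K}} {d : K}.
Hypothesis TE : forall q, T q = P * (q \Po ('X - d%:P)).

Lemma lift1_shift F : lift1 T F = P^:P * (F \Po (Y1 - d%:P%:P)).
Proof.
rewrite /lift1 comp_polyE mulr_sumr; apply: eq_bigr => i _.
rewrite TE comp_Xn_poly /tens rmorphM rmorphXn rmorphB /= map_polyX map_polyC.
by rewrite -mul_polyC [(F`_i)%:P * _]mulrC mulrA.
Qed.

Lemma lift2_shift F : lift2 T F = P%:P * map_poly (comp_poly ('X - d%:P)) F.
Proof.
rewrite /lift2 /map_poly poly_def mulr_sumr; apply: eq_bigr => i _.
by rewrite TE /tens map_polyXn -mul_polyC polyCM mulrC -mulrA.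
Qed.
End ShiftOperator.

Lemma subst_sum_comp_shift p d :
  subst_sum (p \Po ('X - d%:P)) = p^:P \Po (Y1 + Y2 - d%:P%:P).
Proof.
rewrite subst_sumE map_comp_poly -comp_polyA rmorphB /= map_polyX map_polyC.
by rewrite comp_polyB comp_polyX comp_polyC.
Qed.

Lemma comp_subst_sum p d :
  subst_sum p \Po (Y1 - d%:P%:P) = subst_sum (p \Po ('X - d%:P)).
Proof.
rewrite subst_sum_comp_shift subst_sumE -comp_polyA.
by rewrite comp_polyD comp_polyX comp_polyC addrAC.
Qed.

Lemma map_subst_sum p d :
  map_poly (comp_poly ('X - d%:P)) (subst_sum p) = subst_sum (p \Po ('X - d%:P)).
Proof.
rewrite subst_sum_comp_shift subst_sumE map_comp_poly -map_poly_comp.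
rewrite (@eq_map_poly _ _ _ polyC) => [|c]; last exact: comp_polyC.
by rewrite rmorphD /= map_polyX map_polyC /= comp_polyX rmorphB addrA.
Qed.

Lemma lift_subst_sum {T1 T2 P1 P2 d} p :
  (forall q, T1 q = P1 * (q \Po ('X - d%:P))) ->
  (forall q, T2 q = P2 * (q \Po ('X - d%:P))) ->
  lift1 T1 (subst_sum p) + lift2 T2 (subst_sum p) =
  (P1^:P + P2%:P) * subst_sum (p \Po ('X - d%:P)).
Proof.
move=> T1E T2E.
by rewrite (lift1_shift T1E) (lift2_shift T2E) comp_subst_sum map_subst_sum mulrDl.
Qed.

Lemma OmLE (lam a : K) m q :
  OmL lam a m q = (lam ^ m *: ('X + (m%:~R * a)%:P)) * (q \Po ('X - (m%:~R)%:P)).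
Proof. by rewrite /OmL scalerAl. Qed.

Lemma OmHE (lam b : K) m q :
  OmH lam b m q = (b * lam ^ m)%:P * (q \Po ('X - (m%:~R)%:P)).
Proof. by rewrite /OmH mul_polyC. Qed.

Lemma subst_sum_affine (u c1 c2 : K) :
  (u *: ('X + c1%:P))^:P + (u *: ('X + c2%:P))%:P =
  subst_sum (u *: ('X + (c1 + c2)%:P)).
Proof.
rewrite -!mul_polyC [in RHS]rmorphM [in RHS]rmorphD subst_sumX !subst_sumC.
rewrite !(rmorphM, rmorphD) /= map_polyX !map_polyC.
by rewrite -mulrDr addrACA.
Qed.

Lemma TL_subst_sum (lam a1 a2 : K) m p :
  TL lam a1 a2 m (subst_sum p) = subst_sum (OmL lam (a1 + a2) m p).
Proof.
rewrite /TL (lift_subst_sum _ (OmLE _ _ _) (OmLE _ _ _)) subst_sum_affine.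
by rewrite [in RHS]OmLE rmorphM mulrDr.
Qed.

Lemma TH_subst_sum (lam b1 b2 : K) m p :
  TH lam b1 b2 m (subst_sum p) = subst_sum (OmH lam (b1 + b2) m p).
Proof.
rewrite /TH (lift_subst_sum _ (OmHE _ _ _) (OmHE _ _ _)).
rewrite [in RHS]OmHE [in RHS]rmorphM subst_sumC map_polyC.
by rewrite [(b1 + b2) * _]mulrDl !rmorphD.
Qed.

Lemma Uspan_submodule (lam a1 b1 a2 b2 : K) : is_submodule lam a1 b1 a2 b2 (@Uspan K).
Proof.
split.
- by apply/UspanP; exists 0; rewrite rmorph0.
- move=> _ _ /UspanP[p ->] /UspanP[q ->]; apply/UspanP.
  by exists (p + q); rewrite rmorphD.
- move=> c _ /UspanP[p ->]; apply/UspanP.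
  by exists (c%:P * p); rewrite rmorphM subst_sumC.
- move=> m _ /UspanP[p ->]; apply/UspanP.
  by exists (OmL lam (a1 + a2) m p); rewrite TL_subst_sum.
- move=> m _ /UspanP[p ->]; apply/UspanP.
  by exists (OmH lam (b1 + b2) m p); rewrite TH_subst_sum.
Qed.

Lemma Uspan_nonzero_proper : nonzero_proper (@Uspan K).
Proof.
split; last by exists Y1; exact: Y1_notin_Uspan.
exists 1; split; last exact/eqP/oner_neq0.
by apply/UspanP; exists 1; rewrite rmorph1.
Qed.

End TensorSquare.

Theorem mainTheorem15 (R : realType) (lam a1 b1 a2 b2 : R[i])
  (hlam : lam != 0) (h1 : (a1, b1) != (0, 0)) (h2 : (a2, b2) != (0, 0)) :
  (is_submodule lam a1 b1 a2 b2 (@Uspan R[i]) /\ nonzero_proper (@Uspan R[i]))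
  /\ reducible lam a1 b1 a2 b2.
Proof.
have U_submodule : is_submodule lam a1 b1 a2 b2 (@Uspan R[i]).
  exact: Uspan_submodule.
have U_nonzero_proper : nonzero_proper (@Uspan R[i]).
  exact: Uspan_nonzero_proper.
by split; last exists (@Uspan R[i]).
Qed.
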